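(* Let $\delta$ be a positive integer and let $$p_\delta(x)=\left(\frac{1+\sqrt{1-4x}}{2}\right)^{\delta+1}+\left(\frac{1-\sqrt{1-4x}}{2}\right)^{\delta+1}.$$ Then $p_\delta(x)$ is a polynomial in $x$ with constant term $1$; writing $p_\delta(x)=\sum_{i=0}^{d}c_ix^i$ with $d=\deg p_\delta$, the sequence $\zeta(\cdot,\delta)$ satisfies the linear recurrence $$\sum_{i=0}^{d}c_i\,\zeta(m-2i,\delta)=0,\quad\text{i.e.}\quad \zeta(m,\delta)=-\sum_{i=1}^{d}c_i\,\zeta(m-2i,\delta),$$ for every integer $m\ge 2d+1$. In other words, $p_\delta$ is the (reciprocal-form) characteristic polynomial of the step-$2$ linear recurrence satisfied by $\zeta(m,\delta)$.
   Context: For positive integers $m$ and $\delta$, a $\delta$-deviation set of size $m$ is a finite sequence $(\alpha_1,\dots,\alpha_\ell)$ of positive integers such that (i) $\sum_i\alpha_i=m$; (ii) $\big|\sum_i\alpha_{2i-1}-\sum_i\alpha_{2i}\big|\le 1$; (iii) $\big|\sum_{1\le i\le j}(-1)^{i-1}\alpha_i\big|\le\delta$ for every $j\ge1$; and $\zeta(m,\delta)$ is the number of $\delta$-deviation sets of size $m$. (Example: $p_3(x)=1-4x+2x^2$ corresponds to $\zeta(m,3)=4\zeta(m-2,3)-2\zeta(m-4,3)$.) *)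

From HB Require Import structures.
From mathcomp Require Import all_boot all_order all_algebra.
Set Implicit Arguments. Unset Strict Implicit. Unset Printing Implicit Defensive.
Import Order.TTheory GRing.Theory Num.Theory.
Local Open Scope ring_scope.

(* Alternating sum  sum_i (-1)^(i-1) alpha_i  (1-based), i.e. with 0-based
   index i the sign is (-1)^i. *)
Definition altsum (s : seq nat) : int :=
  \sum_(i < size s) (-1) ^+ i * (nth 0%N s i)%:Z.

Definition is_dev_set (m delta : nat) (s : seq nat) : bool :=
  [&& all (fun a => (0 < a)%N) s,
      sumn s == m,
      `|altsum s| <= 1
    & [forall j : 'I_(size s).+1, `|altsum (take j s)| <= delta%:Z]].

(* zeta(m, delta): number of delta-deviation sets of size m.  Such a sequence
   has length l <= m and entries <= m, so we count them as l-tuples of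
   elements of 'I_m.+1, for each l <= m. *)
Definition zeta (m delta : nat) : nat :=
  (\sum_(l < m.+1)
     #|[set t : l.-tuple 'I_m.+1 | is_dev_set m delta (map val t)]|)%N.

Definition pdelta (R : rcfType) (delta : nat) (x : R) : R :=
  ((1 + Num.sqrt (1 - 4 * x)) / 2) ^+ delta.+1
  + ((1 - Num.sqrt (1 - 4 * x)) / 2) ^+ delta.+1.

From HB Require Import structures.
From mathcomp Require Import all_boot all_order all_algebra.
From mathcomp Require Import zify ring lra.
Import Order.TTheory GRing.Theory Num.Theory.
Local Open Scope ring_scope.

(* Reading a deviation set entry by entry, its signed alternating sum moves
   from S to a - S.  Peeling off unit steps turns this into +-1 walks on
   [-delta, delta]: 2 zeta(n, delta) is the number of n-step walks from 0 that
   stay in the window and end in [-1, 1].  On such walks one step acts as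
   S + S^-1 for the shift S, and the Lucas identity
   L_k(S + S^-1) = S^k + S^-k at k = delta + 1, read at 0, vanishes because
   +-(delta + 1) lies outside the window.  In reciprocal form L_k is the
   polynomial with L_k(ab) = a^k + b^k whenever a + b = 1, and the roots
   (1 +- sqrt(1 - 4x)) / 2 add up to 1 and multiply to x, so L_(delta+1) is
   p_delta. *)

(* [S] is the alternating sum of the entries read so far, signed so that the
   next entry [a] enters positively: reading [a] turns [S] into [a - S]. *)
Fixpoint devseq_from (d : nat) (S : int) (s : seq nat) : bool :=
  match s with
  | [::] => (`|S| <= 1) && (`|S| <= d%:Z)
  | a :: s' => [&& (0 < a)%N, `|S| <= d%:Z & devseq_from d (a%:Z - S) s']
  end.

Lemma devseq_from_nilN d S : devseq_from d (- S) [::] = devseq_from d S [::].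
Proof. by rewrite /= normrN. Qed.

Lemma altsum_nil : altsum [::] = 0.
Proof. by rewrite /altsum big_ord0. Qed.

Lemma altsum_cons a s : altsum (a :: s) = a%:Z - altsum s.
Proof.
rewrite /altsum /= big_ord_recl /= expr0 mul1r -sumrN.
congr (_ + _); apply: eq_bigr => i _.
by rewrite /bump /= add0n exprS mulN1r mulNr.
Qed.

Lemma devseq_fromE d S s :
  devseq_from d S s =
  [&& all (fun a => (0 < a)%N) s, `|S - altsum s| <= 1
    & [forall j : 'I_(size s).+1, `|S - altsum (take j s)| <= d%:Z]].
Proof.
elim: s S => [|a s IH] S.
  rewrite /= altsum_nil subr0; apply/idP/idP.
  - by case/andP=> -> H; apply/forallP => j; rewrite /= ?altsum_nil ?subr0.
  - by case/andP=> -> /forallP/(_ ord0); rewrite /= ?altsum_nil ?subr0.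
have normB t : `|S - (a%:Z - t)| = `|a%:Z - S - t|.
  by rewrite -normrN; congr `|_|; ring.
have -> : [forall j : 'I_(size (a :: s)).+1,
             `|S - altsum (take j (a :: s))| <= d%:Z]
   = (`|S| <= d%:Z) &&
     [forall j : 'I_(size s).+1, `|a%:Z - S - altsum (take j s)| <= d%:Z].
  apply/forallP/andP.
  - move=> H; split; first by move: (H ord0); rewrite /= altsum_nil subr0.
    by apply/forallP => j; move: (H (lift ord0 j)); rewrite lift0 /= altsum_cons normB.
  - case=> H0 /forallP H [[|j] Hj] /=; first by rewrite altsum_nil subr0.
    by move: (H (Ordinal (Hj : (j < (size s).+1)%N))); rewrite /= altsum_cons normB.
rewrite /= altsum_cons normB IH.
by case: (0 < a)%N; case: (all _ s); case: (`|S| <= _); case: (`|_ - altsum s| <= 1).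
Qed.

Lemma is_dev_setE m d s : is_dev_set m d s = (sumn s == m) && devseq_from d 0 s.
Proof.
rewrite /is_dev_set devseq_fromE sub0r normrN.
under [in RHS]eq_forallb => j do rewrite sub0r normrN.
by case: (all _ s); case: (sumn s == m).
Qed.

Section BigTuple.
Variables (R : Type) (idx : R) (op : Monoid.com_law idx) (T : finType).

Lemma big_tuple0 (F : 0.-tuple T -> R) :
  \big[op/idx]_(t : 0.-tuple T) F t = F [tuple].
Proof. by rewrite (big_pred1 [tuple]) // => t; apply/esym/eqP; exact: tuple0. Qed.

Lemma big_tupleS l (F : l.+1.-tuple T -> R) :
  \big[op/idx]_(t : l.+1.-tuple T) F t =
  \big[op/idx]_(x : T) \big[op/idx]_(t : l.-tuple T) F (cons_tuple x t).
Proof.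
rewrite pair_big (reindex (fun p : T * l.-tuple T => cons_tuple p.1 p.2)) //.
exists (fun t => (thead t, behead_tuple t)) => [[x t] _|t _] /=.
  by congr pair; apply: val_inj.
by rewrite [in RHS](tuple_eta t); apply: val_inj.
Qed.

End BigTuple.

Section DeviationCount.
Variable d : nat.

Definition ndev_len l B S m : nat :=
  \sum_(t : l.-tuple 'I_B) ((sumn (map val t) == m) && devseq_from d S (map val t)).

Fixpoint ndev_fuel f m S : nat :=
  match f with
  | 0 => (m == 0)%N && devseq_from d S [::]
  | f'.+1 => ((m == 0)%N && devseq_from d S [::]) +
      ((`|S| <= d%:Z)%R : nat) * \sum_(x < m.+1) (0 < x)%N * ndev_fuel f' (m - x) (x%:Z - S)%R
  end%N.

(* A sequence counted by [ndev m S] has length at most [m], which is thus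
   enough fuel. *)
Definition ndev m S := ndev_fuel m m S.

Lemma ndev_lenS l B S m :
  ndev_len l.+1 B S m = (((`|S| <= d%:Z)%R : nat) *
    \sum_(x < B) ((0 < x) && (x <= m)) * ndev_len l B (x%:Z - S)%R (m - x))%N.
Proof.
rewrite /ndev_len big_tupleS big_distrr /=; apply: eq_bigr => x _.
rewrite mulnA big_distrr /=; apply: eq_bigr => t _.
have -> : (x + sumn (map val t) == m)%N = (x <= m)%N && (sumn (map val t) == m - x)%N.
  by case: (leqP x m) => h /=; apply/eqP/eqP; lia.
by case: (0 < x)%N; case: (x <= m)%N; case: (`|S| <= _); case: (_ == _)%N; case: devseq_from.
Qed.

Lemma sum_ndev_len f m S B : (m < B)%N ->
  (\sum_(l < f.+1) ndev_len l B S m)%N = ndev_fuel f m S.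
Proof.
elim: f m S => [|f IH] m S mB.
  by rewrite big_ord1 /ndev_len big_tuple0 /= eq_sym.
rewrite big_ord_recl /= {1}/ndev_len big_tuple0 /= eq_sym; congr addn.
under eq_bigr do rewrite ndev_lenS.
rewrite -big_distrr /= exchange_big /=; congr muln.
rewrite (eq_bigr (fun j : 'I_B =>
           (0 < j <= m)%N * ndev_fuel f (m - j) (j%:Z - S)%R)%N); last first.
  by move=> j _; rewrite -big_distrr /= IH //; lia.
rewrite (big_ord_widen B (fun x => (0 < x)%N * ndev_fuel f (m - x) (x%:Z - S)%R)%N mB).
rewrite [RHS]big_mkcond /=; apply: eq_bigr => x _.
by rewrite ltnS; case: (0 < x)%N; case: (x <= m)%N.
Qed.

Lemma ndev_fuel0 f S : ndev_fuel f 0 S = devseq_from d S [::].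
Proof. by case: f => //= f; rewrite big_ord1 /= mul0n muln0 addn0. Qed.

Lemma ndev_fuel_stable f g m S : (m <= f)%N -> (m <= g)%N ->
  ndev_fuel f m S = ndev_fuel g m S.
Proof.
elim: f g m S => [|f IH] [|g] m S; rewrite ?leqn0.
- by [].
- by move=> /eqP -> _; rewrite !ndev_fuel0.
- by move=> _ /eqP ->; rewrite !ndev_fuel0.
move=> hf hg /=; congr (_ + _ * _)%N; apply: eq_bigr => [[[|x] hx]] _ //=.
by rewrite (IH g) //; lia.
Qed.

Lemma zeta_ndev m : zeta m d = ndev m 0.
Proof.
rewrite /zeta /ndev -(@sum_ndev_len m m 0 m.+1 (ltnSn m)); apply: eq_bigr => l _.
rewrite /ndev_len -sum1_card big_mkcond /=; apply: eq_bigr => t _.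
by rewrite inE is_dev_setE; case: (_ && _).
Qed.

Lemma ndevE m S : ndev m S = (((m == 0)%N && devseq_from d S [::]) +
  ((`|S| <= d%:Z)%R : nat) * \sum_(x < m.+1) (0 < x)%N * ndev (m - x) (x%:Z - S)%R)%N.
Proof.
case: m => [|m]; first by rewrite /ndev ndev_fuel0 big_ord1 /= muln0 addn0.
rewrite /ndev /=; congr (_ + _ * _)%N; apply: eq_bigr => [[[|x] hx]] _ //=.
by rewrite (@ndev_fuel_stable m (m - x)) //; lia.
Qed.

Lemma ndev_out m S : ~~ (`|S| <= d%:Z) -> ndev m S = 0%N.
Proof.
move=> /negbTE h; rewrite ndevE h /= mul0n addn0.
by case: (m == 0)%N => //=; rewrite h andbF.
Qed.

(* Split off the sequences starting with 1; lowering the first entry of the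
   others by 1 shifts the starting state from [S] to [S - 1]. *)
Lemma ndev_step n S : `|S| <= d%:Z ->
  (ndev n.+1 S + ((n == 0)%N && devseq_from d (S - 1) [::]) =
   ndev n (1 - S) + ndev n (S - 1))%N.
Proof.
move=> hS.
rewrite ndevE hS /= add0n mul1n big_ord_recl /= mul0n add0n.
rewrite big_ord_recl /bump /= !mul1n subSS subn0 -addnA; congr addn.
rewrite (eq_bigr (fun j : 'I_n => ndev (n - j.+1) ((j.+1)%:Z - (S - 1)))); last first.
  by move=> j _; rewrite /bump /= mul1n; congr ndev; lia.
case hS1: (`|S - 1| <= d%:Z).
  rewrite [in RHS]ndevE hS1 mul1n addnC; congr addn; first by rewrite /= hS1.
  rewrite big_ord_recl /= mul0n add0n; apply: eq_bigr => j _.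
  by rewrite /bump /= add1n mul1n.
rewrite ndev_out ?hS1 // !andbF addn0.
by apply: big1 => j _; apply: ndev_out; move: hS1 hS; lia.
Qed.

End DeviationCount.

Section Walks.
Variable d : nat.

Definition window (v : int -> nat) (j : int) : nat :=
  if `|j| <= d%:Z then v j else 0.

Definition walk_step (v : int -> nat) (j : int) : nat :=
  (window v (j + 1) + window v (j - 1))%N.

(* [walk n j] counts the +-1 walks of length [n] from [j] whose later
   positions stay in [-d, d] and whose last position lies in [-1, 1]. *)
Definition walk n : int -> nat := iter n walk_step (fun j => `|j| <= 1 : nat).

Lemma window_in v j : `|j| <= d%:Z -> window v j = v j.
Proof. by rewrite /window => ->. Qed.

Lemma walkS n : walk n.+1 = walk_step (walk n).
Proof. by []. Qed.

Lemma window_walk_ndev n q :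
  (window (walk n) q + ((n == 0)%N && devseq_from d q [::]) =
   ndev d n q + ndev d n (- q))%N.
Proof.
elim: n q => [|n IH] q.
  rewrite /ndev !ndev_fuel0 /= /window normrN.
  by case: (`|q| <= d%:Z); rewrite ?andbT ?andbF ?addn0.
case hq: (`|q| <= d%:Z); last first.
  by rewrite /window hq !ndev_out ?normrN ?hq.
have IHp := IH (q + 1); have IHm := IH (q - 1).
have stepq := @ndev_step d n q hq.
rewrite (_ : 1 - q = - (q - 1)) in stepq; last by ring.
have stepNq : `|- q| <= d%:Z by rewrite normrN.
move/(@ndev_step d n): stepNq => stepNq.
rewrite (_ : 1 - - q = q + 1) in stepNq; last by ring.
rewrite (_ : - q - 1 = - (q + 1)) ?devseq_from_nilN in stepNq; last by ring.
(* Add the first-step identities at [q] and [-q] to the induction hypotheses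
   at [q + 1] and [q - 1]; the boundary terms cancel. *)
rewrite {1}/window hq walkS /walk_step addn0; apply/eqP.
rewrite -(eqn_add2r (((n == 0)%N && devseq_from d (q + 1) [::]) +
                     ((n == 0)%N && devseq_from d (q - 1) [::]))).
rewrite addnACA IHp IHm [X in _ == _ + X]addnC [X in _ == X]addnACA stepq stepNq.
by rewrite addnC (addnC (ndev d n (q - 1))).
Qed.

Lemma walk_zeta n : (0 < n)%N -> walk n 0 = (2 * zeta n d)%N.
Proof.
move=> n_gt0; have := window_walk_ndev n 0.
rewrite /window normr0 oppr0 -zeta_ndev; case: n n_gt0 => //= n _.
lia.
Qed.

End Walks.

Section LucasPoly.
Variable R : comNzRingType.

Fixpoint lucas (k : nat) : {poly R} :=
  match k with
  | 0 => 2%:P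
  | 1 => 1
  | (k'.+1 as k1).+1 => lucas k1 - 'X * lucas k'
  end.

Lemma lucasSS k : lucas k.+2 = lucas k.+1 - 'X * lucas k.
Proof. by []. Qed.

Lemma coef_lucasSS k i : (lucas k.+2)`_i.+1 = (lucas k.+1)`_i.+1 - (lucas k)`_i.
Proof. by rewrite lucasSS coefB coefXM. Qed.

Lemma lucas_coef_eq0 k i : (k < 2 * i)%N -> (lucas k)`_i = 0.
Proof.
elim/ltn_ind: k i => -[|[|k]] IH [|[|i]] // hi; rewrite ?coefC ?coef1 //.
by rewrite coef_lucasSS !IH ?subr0 //; lia.
Qed.

Lemma lucas_coef0 k : (0 < k)%N -> (lucas k)`_0 = 1.
Proof.
elim/ltn_ind: k => -[|[|k]] IH // _; first by rewrite coef1.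
by rewrite lucasSS coefB coefXM subr0 IH.
Qed.

Lemma lucas_coef_half j :
  (lucas (2 * j))`_j = 2 * (-1) ^+ j /\
  (lucas (2 * j).+1)`_j = (2 * j).+1%:R * (-1) ^+ j.
Proof.
elim: j => [|j [IH1 IH2]]; first by rewrite coefC coef1 !mulr1.
have -> : (2 * j.+1 = (2 * j).+2)%N by lia.
have h0 : (lucas (2 * j).+1)`_j.+1 = 0 by apply: lucas_coef_eq0; lia.
rewrite !coef_lucasSS h0 IH1 IH2 exprS -(addn2 (2 * j).+1) natrD.
by split; ring.
Qed.

End LucasPoly.

Arguments lucas : simpl never.

Lemma size_lucas (R : numDomainType) k : size (lucas R k) = (k./2).+1.
Proof.
apply/anti_leq/andP; split.
  by apply/leq_sizeP => i hi; apply: lucas_coef_eq0; rewrite -[k]odd_double_half; lia.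
rewrite ltnNge; apply/negP => /(nth_default 0)/eqP; apply/negP.
move: (odd_double_half k); set j := k./2; rewrite -mul2n.
case: (lucas_coef_half R j) => [h0 h1]; case: (odd k) => /= <-;
  by rewrite ?h0 ?h1 mulf_neq0 ?pnatr_eq0 ?signr_eq0.
Qed.

Lemma horner_lucas (R : comNzRingType) (a b : R) k : a + b = 1 ->
  (lucas R k).[a * b] = a ^+ k + b ^+ k.
Proof.
move=> hab; elim/ltn_ind: k => -[|[|k]] IH.
- by rewrite hornerC.
- by rewrite hornerC !expr1.
rewrite lucasSS hornerD hornerN hornerM hornerX !IH //.
have -> : b = 1 - a by rewrite -hab; ring.
by rewrite !exprS; ring.
Qed.

Section LucasWalk.
Variables (R : comNzRingType) (d : nat).

Definition sym_window (v : int -> nat) (k : nat) : nat :=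
  (window d v k%:Z + window d v (- k%:Z))%N.

Definition lucas_walk k n : R :=
  \sum_(i < k.+1) (lucas R k)`_i * (walk d (n + k - 2 * i) 0)%:R.

Lemma lucas_walkSS k n : lucas_walk k.+2 n = lucas_walk k.+1 n.+1 - lucas_walk k n.
Proof.
rewrite /lucas_walk.
under eq_bigr do rewrite lucasSS coefB mulrBl.
rewrite sumrB; congr (_ - _).
  rewrite big_ord_recr /= (@lucas_coef_eq0 R k.+1 k.+2) ?mul0r ?addr0; last by lia.
  by apply: eq_bigr => i _; rewrite (_ : (n + k.+2 = n.+1 + k.+1)%N) //; lia.
rewrite big_ord_recl coefXM mul0r add0r big_ord_recr /= coefXM /=.
rewrite lucas_coef_eq0 ?mul0r ?addr0; last by lia.
by apply: eq_bigr => i _; rewrite /bump /= add1n coefXM /=; congr (_ * (walk d _ 0)%:R); lia.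
Qed.

Lemma sym_window_step v k : (k.+1 <= d)%N ->
  sym_window (walk_step d v) k.+1 = (sym_window v k.+2 + sym_window v k)%N.
Proof.
move=> hk; rewrite /sym_window !(@window_in d (walk_step d v)) /walk_step; try lia.
rewrite (_ : (k.+1)%:Z + 1 = (k.+2)%:Z); last by lia.
rewrite (_ : (k.+1)%:Z - 1 = k%:Z); last by lia.
rewrite (_ : - (k.+1)%:Z + 1 = - k%:Z); last by lia.
rewrite (_ : - (k.+1)%:Z - 1 = - (k.+2)%:Z); last by lia.
lia.
Qed.

(* In reciprocal form [lucas k] is the Lucas polynomial [L_k] with
   [L_k(S + S^-1) = S^k + S^-k] for the shift [S]; inside [-d, d] the walk
   step acts as [S + S^-1]. *)
Lemma lucas_walkE k n : (k <= d.+1)%N ->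
  lucas_walk k n = (sym_window (walk d n) k)%:R.
Proof.
elim/ltn_ind: k n => -[|[|k]] IH n hk.
- rewrite /lucas_walk big_ord1 coefC addn0 subn0 /sym_window /window oppr0 normr0.
  by rewrite /= natrD mulrDl mul1r.
- rewrite /lucas_walk big_ord_recr big_ord1 /= !coef1 /= mul1r mul0r addr0 muln0 addn1 subn0.
  rewrite walkS /walk_step /sym_window; congr (window _ _ _ + window _ _ _)%:R; lia.
rewrite lucas_walkSS !IH; try lia.
by rewrite walkS sym_window_step ?natrD ?addrK //; lia.
Qed.

End LucasWalk.

Lemma lucas_walk_rec (R : comNzRingType) d m : (d.+1 <= m)%N ->
  \sum_(i < d.+2) (lucas R d.+1)`_i * (walk d (m - 2 * i) 0)%:R = 0.
Proof.
move=> hm; have := @lucas_walkE R d d.+1 (m - d.+1) (leqnn _).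
rewrite /lucas_walk subnK // => ->.
by rewrite /sym_window /window !ifF //; lia.
Qed.

Lemma lucas_zeta_rec (R : numDomainType) d m : (2 * (d.+1)./2 < m)%N ->
  \sum_(i < (d.+1)./2.+1) (lucas R d.+1)`_i * (zeta (m - 2 * i) d)%:R = 0.
Proof.
move: (d.+1)./2 (odd_double_half d.+1) => h; rewrite -muln2 => hd hm.
apply: (@mulfI _ 2); first by rewrite pnatr_eq0.
rewrite mulr0 mulr_sumr -[RHS](@lucas_walk_rec R d m); last by lia.
rewrite (big_ord_widen d.+2 (fun i => 2 * ((lucas R d.+1)`_i * (zeta (m - 2 * i) d)%:R)));
  last by lia.
rewrite big_mkcond /=; apply: eq_bigr => i _; case: ltnP => hi.
  by rewrite walk_zeta ?natrM; [rewrite mulrCA | lia].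
by rewrite lucas_coef_eq0 ?mul0r //; lia.
Qed.

Theorem theorem2 (R : rcfType) (delta : nat) :
  (0 < delta)%N ->
  exists p : {poly R},
    (forall x : R, x <= 4^-1 -> p.[x] = pdelta delta x) /\
    p`_0 = 1 /\
    (forall m : nat, (2 * (size p).-1 + 1 <= m)%N ->
       \sum_(i < (size p).-1.+1) p`_i * (zeta (m - 2 * i) delta)%:R = 0).
Proof.
(* The recurrence holds for [delta = 0] as well. *)
move=> _; exists (lucas R delta.+1); rewrite size_lucas /=; split; [|split].
- move=> x hx; rewrite /pdelta; set s := Num.sqrt (1 - 4 * x).
  have s2 : s ^+ 2 = 1 - 4 * x by rewrite sqr_sqrtr; lra.
  have -> : x = (1 + s) / 2 * ((1 - s) / 2).
    have -> : (1 + s) / 2 * ((1 - s) / 2) = (1 - s ^+ 2) / 4 by field.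
    by rewrite s2; field.
  by rewrite horner_lucas //; field.
- exact: lucas_coef0.
- by move=> m; rewrite addn1; exact: lucas_zeta_rec.
Qed.
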